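(* For all integers $n,m\ge 2$, the number $a(n,m,\Gamma_{gs})$ of group-separable $(n,m)$-elections on the candidate set $\{c_1,\ldots,c_m\}$ satisfies $a(n,m,\Gamma_{gs})\le m!\cdot(3+2\sqrt 2)^{m(n-1)}$.
   Context: An $(n,m)$-election $(C,\mathcal{P})$ is a set $C$ of $m$ candidates with an ordered $n$-tuple $\mathcal{P}=(V_1,\ldots,V_n)$ of total orders (votes) on $C$. The election is group-separable if for every subset $C'\subseteq C$ with $|C'|\ge 2$ there exists a partition of $C'$ into two nonempty sets $C_1,C_2$ such that in every vote either all candidates of $C_1$ are ranked above all candidates of $C_2$, or all candidates of $C_2$ are ranked above all candidates of $C_1$. *)

From HB Require Import structures.
From mathcomp Require Import all_boot all_order all_algebra all_fingroup.
Set Implicit Arguments. Unset Strict Implicit. Unset Printing Implicit Defensive.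

(* A vote (total order on the
   candidates) is represented by a permutation v : {perm 'I_m} sending each
   candidate to its position (0 = top); this is a bijection between total
   orders on 'I_m and permutations. *)
Definition vote (m : nat) := {perm 'I_m}.

Definition election (n m : nat) := {ffun 'I_n -> vote m}.

Definition above (m : nat) (v : vote m) (a b : 'I_m) : bool := (v a < v b)%N.

Definition all_above (m : nat) (v : vote m) (C1 C2 : {set 'I_m}) : bool :=
  [forall a in C1, forall b in C2, above v a b].

Definition group_separable (n m : nat) (P : election n m) : bool :=
  [forall C' : {set 'I_m}, (1 < #|C'|)%N ==>
     [exists C1 : {set 'I_m},
        [&& C1 \subset C', C1 != set0, C' :\: C1 != set0 &
            [forall i : 'I_n,
               all_above (P i) C1 (C' :\: C1) || all_above (P i) (C' :\: C1) C1]]]].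

Definition num_gs (n m : nat) : nat := #|[set P : election n m | group_separable P]|.

From HB Require Import structures.
From mathcomp Require Import all_boot all_order all_algebra all_fingroup.
From Stdlib Require Import ClassicalEpsilon.
From mathcomp Require Import zify ring lra.
Set Implicit Arguments. Unset Strict Implicit. Unset Printing Implicit Defensive.

(* Read a vote as the list of its candidates from top to bottom.  Group separability makes
   every vote a separable rearrangement of the first one: it arises from the first ranking by
   cutting it into two nonempty blocks, keeping or swapping them, and recursing on the blocks.
   Cutting at the first cut point shows that m distinct items have at most g(m) separable
   rearrangements, where g(1) = 1 and g(m) = sum_(0<k<m) (g(k) + [k = 1]) g(m - k); hence
   a(n,m) <= m! g(m)^(n-1).  For x = 3 - 2 sqrt 2 = 1/(3 + 2 sqrt 2), the partial sums T of
   sum_m g(m) x^m satisfy T' <= x + T^2 + x T, whose fixed point is sqrt 2 - 1 < 1; so the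
   partial sums stay below 1 and g(m) <= (3 + 2 sqrt 2)^m. *)

Section SeparableRearrangements.
Variable T : eqType.
Implicit Types l r s : seq T.

Lemma index_take_lt_drop s k x y :
  uniq s -> x \in take k s -> y \in drop k s -> index x s < index y s.
Proof.
rewrite -{1 4 5}(cat_take_drop k s) cat_uniq => /and3P[_ disj _] xt yd.
have yNt : y \notin take k s by apply: contra disj => yt; apply/hasP; exists y.
by rewrite !index_cat xt (negPf yNt) (leq_trans (_ : _ < size (take k s))) ?index_mem ?leq_addr.
Qed.

Lemma nth_head_in_take x0 l k : 0 < k -> 0 < size l -> nth x0 l 0 \in take k l.
Proof.
by move=> k0 l0; rewrite -(nth_take _ k0) mem_nth // size_take; case: ifP => //; lia.
Qed.

Lemma nth_last_in_drop x0 l k : k < size l -> nth x0 l (size l).-1 \in drop k l.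
Proof.
move=> kl; have -> : (size l).-1 = k + ((size l).-1 - k) by lia.
by rewrite -nth_drop mem_nth // size_drop; lia.
Qed.

(* In the swap case the first [k] items of [l] form the last block of [r]. *)
Inductive separable : seq T -> seq T -> Prop :=
| separable_small l : size l <= 1 -> separable l l
| separable_keep l r k : 0 < k < size l ->
    separable (take k l) (take k r) -> separable (drop k l) (drop k r) -> separable l r
| separable_swap l r k : 0 < k < size l ->
    separable (take k l) (drop (size l - k) r) -> separable (drop k l) (take (size l - k) r) ->
    separable l r.

Lemma perm_take_drop l r k :
  perm_eq (take k l) (take k r) -> perm_eq (drop k l) (drop k r) -> perm_eq l r.
Proof. by move=> pt pd; rewrite -(cat_take_drop k l) -(cat_take_drop k r) perm_cat. Qed.

Lemma separable_perm l r : separable l r -> perm_eq l r.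
Proof.
elim=> {l r} [l _ | l r k _ _ pt _ pd | l r k _ _ pt _ pd]; first exact: perm_refl.
- exact: perm_take_drop pt pd.
- by rewrite -(cat_take_drop k l) -(cat_take_drop (size l - k) r) perm_catC perm_cat.
Qed.

Lemma separable_cat_keep (s1 s2 t1 t2 : seq T) :
  0 < size s1 -> 0 < size s2 -> size t1 = size s1 ->
  separable s1 t1 -> separable s2 t2 -> separable (s1 ++ s2) (t1 ++ t2).
Proof.
move=> s10 s20 e1 st1 st2; apply: (@separable_keep _ _ (size s1)).
- by rewrite size_cat; lia.
- by rewrite take_size_cat // take_size_cat.
- by rewrite drop_size_cat // drop_size_cat.
Qed.

Lemma separable_cat_swap (s1 s2 t1 t2 : seq T) :
  0 < size s1 -> 0 < size s2 -> size t2 = size s2 ->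
  separable s1 t1 -> separable s2 t2 -> separable (s1 ++ s2) (t2 ++ t1).
Proof.
move=> s10 s20 e2 st1 st2; apply: (@separable_swap _ _ (size s1)).
- by rewrite size_cat; lia.
- by rewrite size_cat addKn -e2 take_size_cat // drop_size_cat.
- by rewrite size_cat addKn -e2 drop_size_cat // take_size_cat.
Qed.

Definition separableb l r : bool :=
  if excluded_middle_informative (separable l r) then true else false.

Lemma separableP l r : reflect (separable l r) (separableb l r).
Proof. by rewrite /separableb; case: excluded_middle_informative => h; constructor. Qed.

Definition keep_cut l r k := [&& 0 < k < size l, separableb (take k l) (take k r)
  & separableb (drop k l) (drop k r)].
Definition swap_cut l r k := [&& 0 < k < size l,
  separableb (take k l) (drop (size l - k) r) & separableb (drop k l) (take (size l - k) r)].
Definition has_keep_cut l r := has (keep_cut l r) (iota 0 (size l)).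
Definition has_swap_cut l r := has (swap_cut l r) (iota 0 (size l)).

Lemma separable_cut l r : separable l r -> 1 < size l -> has_keep_cut l r || has_swap_cut l r.
Proof.
case=> {l r} [l l1 | l r k kl pt pd | l r k kl pt pd] l2; first by rewrite ltnNge l1 in l2.
- apply/orP; left; apply/hasP; exists k; first by rewrite mem_iota; lia.
  by rewrite /keep_cut kl /=; apply/andP; split; apply/separableP.
- apply/orP; right; apply/hasP; exists k; first by rewrite mem_iota; lia.
  by rewrite /swap_cut kl /=; apply/andP; split; apply/separableP.
Qed.

(* A keep cut puts the first item of [l] before its last item in [r], a swap cut after it. *)
Lemma keep_swap_cut_exclusive l r k j : uniq l -> keep_cut l r k -> swap_cut l r j -> False.
Proof.
move=> ul /and3P[/andP[k0 kl] /separableP kt /separableP kd]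
  /and3P[/andP[j0 jl] /separableP jt /separableP jd].
have plr := perm_take_drop (separable_perm kt) (separable_perm kd).
have ur : uniq r by rewrite -(perm_uniq plr).
have x0 : T by case: (l) kl => [|y] //.
pose a := nth x0 l 0; pose b := nth x0 l (size l).-1.
have ab : index a r < index b r.
  apply: (@index_take_lt_drop _ k) => //.
    by rewrite -(perm_mem (separable_perm kt)) nth_head_in_take //; lia.
  by rewrite -(perm_mem (separable_perm kd)) nth_last_in_drop.
have ba : index b r < index a r.
  apply: (@index_take_lt_drop _ (size l - j)) => //.
    by rewrite -(perm_mem (separable_perm jd)) nth_last_in_drop.
  by rewrite -(perm_mem (separable_perm jt)) nth_head_in_take //; lia.
by move: (ltn_trans ab ba); rewrite ltnn.
Qed.

Lemma keep_cut_prefix l r k j : k < size l -> keep_cut (take k l) (take k r) j ->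
  separableb (drop k l) (drop k r) -> keep_cut l r j.
Proof.
move=> kl /and3P[/andP[j0 jk] /separableP tt /separableP td] /separableP d.
rewrite size_take kl in jk; rewrite !take_takel ?(ltnW jk) // in tt.
apply/and3P; split; [apply/andP; split => //; lia | exact/separableP |].
apply/separableP; apply: (@separable_keep _ _ (k - j)); first by rewrite size_drop; lia.
- by rewrite !take_drop subnK ?(ltnW jk).
- by rewrite !drop_drop subnK ?(ltnW jk).
Qed.

Lemma swap_cut_prefix l r k j : k < size l ->
  swap_cut (take k l) (drop (size l - k) r) j -> separableb (drop k l) (take (size l - k) r) ->
  swap_cut l r j.
Proof.
set s := size l => kl /and3P[/andP[j0 jk] /separableP tt /separableP td] /separableP d.
rewrite size_take kl in jk tt td.
have e : k - j + (s - k) = s - j by lia.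
rewrite !take_takel ?(ltnW jk) // drop_drop e in tt.
apply/and3P; split; [apply/andP; split => //; lia | exact/separableP |].
apply/separableP; apply: (@separable_swap _ _ (k - j)); first by rewrite size_drop; lia.
- rewrite size_drop take_drop subnK ?(ltnW jk) //.
  have -> : s - j - (k - j) = s - k by lia.
  by rewrite take_drop e in td.
- rewrite size_drop drop_drop subnK ?(ltnW jk) //.
  have -> : s - j - (k - j) = s - k by lia.
  by rewrite take_takel //; lia.
Qed.

Lemma no_keep_cut_take l r k : keep_cut l r k -> (forall j, keep_cut l r j -> k <= j) ->
  ~~ has_keep_cut (take k l) (take k r).
Proof.
case/and3P=> /andP[_ kl] _ td kmin; apply/hasP => -[j _ cutj].
have := kmin j (keep_cut_prefix kl cutj td).
by case/and3P: cutj => /andP[_]; rewrite size_take kl; lia.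
Qed.

Lemma no_swap_cut_take l r k : swap_cut l r k -> (forall j, swap_cut l r j -> k <= j) ->
  ~~ has_swap_cut (take k l) (drop (size l - k) r).
Proof.
case/and3P=> /andP[_ kl] _ td kmin; apply/hasP => -[j _ cutj].
have := kmin j (swap_cut_prefix kl cutj td).
by case/and3P: cutj => /andP[_]; rewrite size_take kl; lia.
Qed.

Definition separables l := [seq r <- permutations l | separableb l r].

Lemma mem_separables l r : (r \in separables l) = separableb l r.
Proof.
rewrite mem_filter mem_permutations andb_idr // => /separableP lr.
by rewrite perm_sym (separable_perm lr).
Qed.

Lemma separables_uniq l : uniq (separables l).
Proof. exact: filter_uniq (permutations_uniq l). Qed.

Lemma size_separables_fact l : uniq l -> size (separables l) <= (size l)`!.
Proof. by move=> ul; rewrite size_filter -(size_permutations ul) count_size. Qed.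

(* Every separable rearrangement of [l] arises by cutting [l] at its first cut point [k]:
   the first block then has no cut of the same kind. *)
Definition cut_concats_at l k :=
  [seq a ++ b | a <- [seq a <- separables (take k l) | ~~ has_keep_cut (take k l) a],
                b <- separables (drop k l)] ++
  [seq b ++ a | a <- [seq a <- separables (take k l) | ~~ has_swap_cut (take k l) a],
                b <- separables (drop k l)].

Definition cut_concats l := flatten [seq cut_concats_at l k | k <- iota 1 (size l - 1)].

Lemma separables_sub_cut_concats l : 1 < size l -> {subset separables l <= cut_concats l}.
Proof.
move=> l2 r; rewrite mem_separables => /separableP lr; apply/flattenP.
case/orP: (separable_cut lr l2) => [/hasP[k0 _ cut0] | /hasP[k0 _ cut0]].
- have [k cut kmin] := ex_minnP (ex_intro _ k0 cut0).
  have /and3P[/andP[k0' kl] tt td] := cut.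
  exists (cut_concats_at l k).
    by apply/mapP; exists k => //; rewrite mem_iota; lia.
  rewrite /cut_concats_at mem_cat; apply/orP; left; apply/allpairsP; exists (take k r, drop k r).
  by rewrite /= cat_take_drop mem_filter !mem_separables tt td no_keep_cut_take.
- have [k cut kmin] := ex_minnP (ex_intro _ k0 cut0).
  have /and3P[/andP[k0' kl] tt td] := cut.
  exists (cut_concats_at l k).
    by apply/mapP; exists k => //; rewrite mem_iota; lia.
  rewrite /cut_concats_at mem_cat; apply/orP; right; apply/allpairsP.
  exists (drop (size l - k) r, take (size l - k) r).
  by rewrite /= cat_take_drop mem_filter !mem_separables tt td no_swap_cut_take.
Qed.

Lemma count_no_keep_cut_no_swap_cut l : uniq l -> 1 < size l ->
  count (fun r => ~~ has_keep_cut l r) (separables l) +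
  count (fun r => ~~ has_swap_cut l r) (separables l) = size (separables l).
Proof.
move=> ul l2; rewrite -(count_predC (has_keep_cut l)) addnC; congr (_ + _).
apply: eq_in_count => r; rewrite mem_separables => /separableP lr /=.
have [/hasP[k _ cutk] | nokeep] := boolP (has_keep_cut l r).
  by apply/negP => /hasP[j _ cutj]; apply: keep_swap_cut_exclusive ul cutk cutj.
by move: (separable_cut lr l2); rewrite (negPf nokeep) /= => ->.
Qed.

Lemma count_no_cut_le l : uniq l -> 0 < size l ->
  count (fun r => ~~ has_keep_cut l r) (separables l) +
  count (fun r => ~~ has_swap_cut l r) (separables l) <= size (separables l) + (size l == 1).
Proof.
move=> ul l0; case: (ltnP 1 (size l)) => l2.
  by rewrite count_no_keep_cut_no_swap_cut // (gtn_eqF l2) addn0.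
have l1 : size l = 1 by lia.
have := size_separables_fact ul; rewrite l1 eqxx factS fact0 => sep1.
by have := count_size (fun r => ~~ has_keep_cut l r) (separables l);
   have := count_size (fun r => ~~ has_swap_cut l r) (separables l); lia.
Qed.

End SeparableRearrangements.

(* The large Schroeder numbers 1, 1, 2, 6, 22, 90, ..., shifted by one; any fuel [>= m]
   computes the same value at [m]. *)
Fixpoint schroeder_rec (fuel m : nat) : nat :=
  if fuel is fuel'.+1 then
    if m <= 1 then 1
    else \sum_(1 <= k < m) (schroeder_rec fuel' k + (k == 1)) * schroeder_rec fuel' (m - k)
  else 1.

Definition schroeder m := schroeder_rec m m.

Lemma schroeder_rec_stable f f' m : m <= f -> m <= f' -> schroeder_rec f m = schroeder_rec f' m.
Proof.
elim: f f' m => [|f IH] [|f'] m //= mf mf'; try by case: m mf mf' => [|[|]].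
case: ifP => // m2; apply: eq_big_nat => k /andP[k1 km].
by rewrite (IH f' k) ?(IH f' (m - k)) //; lia.
Qed.

Lemma schroeder_small m : m <= 1 -> schroeder m = 1.
Proof. by case: m => [|[|]]. Qed.

Lemma schroederE m : 1 < m ->
  schroeder m = \sum_(1 <= k < m) (schroeder k + (k == 1)) * schroeder (m - k).
Proof.
case: m => // m m2; rewrite /schroeder /= ifN -?ltnNge //.
apply: eq_big_nat => k /andP[k1 km].
by rewrite (@schroeder_rec_stable m k k) ?(@schroeder_rec_stable m (m.+1 - k)) //; lia.
Qed.

Lemma size_separables_le (T : eqType) (l : seq T) :
  uniq l -> size (separables l) <= schroeder (size l).
Proof.
have [N] := ubnP (size l); elim: N l => // N IH l lN ul.
have [l1 | l2] := leqP (size l) 1.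
  rewrite schroeder_small //; apply: leq_trans (size_separables_fact ul) _.
  by case: (size l) l1 => [|[|]].
apply: leq_trans (uniq_leq_size (separables_uniq l) (separables_sub_cut_concats l2)) _.
rewrite schroederE // size_flatten /shape -map_comp sumnE big_map.
rewrite [leqRHS]big_seq -[iota _ _]/(index_iota 1 (size l)) big_seq.
apply: leq_sum => k; rewrite mem_index_iota => /andP[k1 kl].
rewrite /= size_cat !size_allpairs !(size_filter _ (separables _)) -mulnDl.
have tk : size (take k l) = k by rewrite size_take kl.
apply: leq_mul.
  apply: leq_trans (count_no_cut_le (take_uniq k ul) _) _; first by rewrite tk.
  by rewrite tk leq_add2r -{2}tk IH ?tk //; [lia | exact: take_uniq].
by have := IH (drop k l); rewrite size_drop; apply; [lia | exact: drop_uniq].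
Qed.

Lemma sorted_filter_cat (T : eqType) (e : rel T) (A B : pred T) s :
  irreflexive e -> transitive e -> sorted e s -> {in s, forall x, A x || B x} ->
  (forall a b, A a -> B b -> e a b) -> s = filter A s ++ filter B s.
Proof.
move=> irr tr; elim: s => //= x s IH xs cov AB.
have covs : {in s, forall y, A y || B y} by move=> y ys; apply: cov; rewrite inE ys orbT.
have IHs := IH (path_sorted xs) covs AB.
have NAB y : A y -> B y = false by move=> Ay; apply/negP => By; have := AB _ _ Ay By; rewrite irr.
case Ax: (A x); first by rewrite NAB //= -IHs.
have Bx : B x by have := cov x (mem_head x s); rewrite Ax.
have /allP xmin := order_path_min tr xs.
have NA y : y \in s -> A y = false.
  by move=> ys; apply/negP => Ay; have := tr _ _ _ (AB _ _ Ay Bx) (xmin y ys); rewrite irr.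
rewrite Bx (eq_in_filter NA) filter_pred0 /=; congr (_ :: _).
by apply/esym/all_filterP/allP => y ys; have := covs y ys; rewrite NA.
Qed.

Section Votes.
Variable m : nat.
Implicit Types v w : vote m.

Definition ranking v : seq 'I_m := [seq (v^-1)%g i | i <- enum 'I_m].

Lemma ranking_uniq v : uniq (ranking v).
Proof. by rewrite map_inj_uniq ?enum_uniq //; exact: perm_inj. Qed.

Lemma mem_ranking v x : x \in ranking v.
Proof. by apply/mapP; exists (v x); rewrite ?mem_enum ?permK. Qed.

Lemma size_ranking v : size (ranking v) = m.
Proof. by rewrite size_map size_enum_ord. Qed.

Lemma ranking_sorted v : sorted (above v) (ranking v).
Proof.
rewrite sorted_map; apply: sub_sorted (_ : sorted (relpre val ltn) (enum 'I_m)).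
  by move=> a b; rewrite /above /= !permKV.
by rewrite -sorted_map val_enum_ord iota_ltn_sorted.
Qed.

Lemma ranking_inj : injective ranking.
Proof.
move=> v w /eq_in_map evw; apply: invg_inj; apply/permP => i.
by apply: evw; rewrite mem_enum.
Qed.

Lemma above_irr v : irreflexive (above v).
Proof. by move=> a; rewrite /above ltnn. Qed.

Lemma above_trans v : transitive (above v).
Proof. by move=> b a c; exact: ltn_trans. Qed.

Lemma all_above_in v A B : all_above v A B -> {in A & B, forall a b, above v a b}.
Proof. by move=> /forall_inP vAB a b aA bB; move/forall_inP: (vAB a aA); apply. Qed.

Definition group_separable_pair v w := forall C' : {set 'I_m}, 1 < #|C'| ->
  exists C1 : {set 'I_m}, [/\ C1 \subset C', C1 != set0, C' :\: C1 != set0,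
    all_above v C1 (C' :\: C1) || all_above v (C' :\: C1) C1 &
    all_above w C1 (C' :\: C1) || all_above w (C' :\: C1) C1].

Definition restrict_ranking w (s : seq 'I_m) := [seq x <- ranking w | x \in s].

Lemma size_restrict_ranking w s : uniq s -> size (restrict_ranking w s) = size s.
Proof.
move=> us; apply/perm_size/uniq_perm; rewrite ?filter_uniq ?ranking_uniq //.
by move=> x; rewrite mem_filter mem_ranking andbT.
Qed.

Lemma restrict_ranking_filter w s (a : pred 'I_m) :
  restrict_ranking w [seq x <- s | a x] = [seq x <- restrict_ranking w s | a x].
Proof.
by rewrite /restrict_ranking -filter_predI; apply: eq_filter => x; rewrite /= mem_filter.
Qed.

Lemma restrict_ranking_small w s : size s <= 1 -> restrict_ranking w s = s.
Proof.
case: s => [|x [|]] // _; rewrite /restrict_ranking.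
  by rewrite (@eq_filter _ _ pred0) ?filter_pred0.
rewrite (@eq_filter _ _ (pred1 x)) => [|y]; last by rewrite mem_seq1.
by rewrite filter_pred1_uniq ?ranking_uniq ?mem_ranking.
Qed.

Section Pair.
Variables v w : vote m.

Lemma separable_restrict_blocks s (A B : {set 'I_m}) :
  sorted (above v) s -> {in s, forall x, (x \in A) || (x \in B)} ->
  has (mem A) s -> has (mem B) s ->
  all_above v A B -> all_above w A B || all_above w B A ->
  separable [seq x <- s | x \in A] (restrict_ranking w [seq x <- s | x \in A]) ->
  separable [seq x <- s | x \in B] (restrict_ranking w [seq x <- s | x \in B]) ->
  separable s (restrict_ranking w s).
Proof.
move=> vs cov hA hB vAB wAB sepA sepB.
have us : uniq s := sorted_uniq (@above_trans v) (@above_irr v) vs.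
have covw : {in restrict_ranking w s, forall x, (x \in A) || (x \in B)}.
  by move=> x; rewrite mem_filter => /andP[/cov].
have sortw : sorted (above w) (restrict_ranking w s).
  exact: sorted_filter (@above_trans w) _ _ (ranking_sorted w).
have sA : 0 < size [seq x <- s | x \in A] by rewrite size_filter -has_count.
have sB : 0 < size [seq x <- s | x \in B] by rewrite size_filter -has_count.
rewrite {1}(sorted_filter_cat (@above_irr v) (@above_trans v) vs cov (all_above_in vAB)).
case/orP: wAB => wAB.
- rewrite (sorted_filter_cat (@above_irr w) (@above_trans w) sortw covw (all_above_in wAB)).
  rewrite -!restrict_ranking_filter; apply: separable_cat_keep => //.
  exact/size_restrict_ranking/filter_uniq.
- have covw' : {in restrict_ranking w s, forall x, (x \in B) || (x \in A)}.
    by move=> x /covw; rewrite orbC.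
  rewrite (sorted_filter_cat (@above_irr w) (@above_trans w) sortw covw' (all_above_in wAB)).
  rewrite -!restrict_ranking_filter; apply: separable_cat_swap => //.
  exact/size_restrict_ranking/filter_uniq.
Qed.

Lemma separable_ranking_pair : group_separable_pair v w -> separable (ranking v) (ranking w).
Proof.
(* Induct on the sublists [s] of [ranking v]: splitting [[set x in s]] cuts [s] and its
   restriction to [ranking w] into the same two blocks. *)
move=> gsp; suff sep_sorted s : sorted (above v) s -> separable s (restrict_ranking w s).
  have := sep_sorted _ (ranking_sorted v).
  have -> // : restrict_ranking w (ranking v) = ranking w.
  by apply/all_filterP/allP => x _; exact: mem_ranking.
have [N] := ubnP (size s); elim: N s => // N IH s sN vs.
have [s1 | s2] := leqP (size s) 1.
  by rewrite restrict_ranking_small //; exact: separable_small.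
have us : uniq s := sorted_uniq (@above_trans v) (@above_irr v) vs.
have cardS : 1 < #|[set x in s]| by rewrite cardsE; move/card_uniqP: us => ->.
have [C1 [sub ne1 ne2 vC wC]] := gsp _ cardS.
set C2 := _ :\: C1 in ne2 vC wC.
have cov : {in s, forall x, (x \in C1) || (x \in C2)} by move=> x xs; rewrite !inE xs andbT orbN.
have inS x : x \in [set x in s] -> x \in s by rewrite inE.
have has1 : has (mem C1) s.
  by case/set0Pn: ne1 => x xC1; apply/hasP; exists x => //; apply/inS/(subsetP sub).
have has2 : has (mem C2) s.
  by case/set0Pn: ne2 => x xC2; apply/hasP; exists x => //; move: xC2; rewrite !inE => /andP[].
have IHblock (A B : {set 'I_m}) : has (mem B) s -> {in s, forall x, x \in B -> x \notin A} ->
    separable [seq x <- s | x \in A] (restrict_ranking w [seq x <- s | x \in A]).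
  move=> /hasP[b bs bB] BA; apply: IH; last exact: sorted_filter (@above_trans v) _ _ vs.
  rewrite size_filter -ltnS; apply: leq_trans sN.
  rewrite ltnS -(count_predC (mem A)) -addn1 leq_add2l.
  by rewrite -has_count; apply/hasP; exists b => //=; rewrite BA.
have C21 : {in s, forall x, x \in C2 -> x \notin C1} by move=> x _; rewrite inE => /andP[].
have C12 : {in s, forall x, x \in C1 -> x \notin C2} by move=> x _ xC1; rewrite inE xC1.
have sep1 := IHblock C1 C2 has2 C21.
have sep2 := IHblock C2 C1 has1 C12.
case/orP: vC => vC.
  exact: (separable_restrict_blocks vs cov).
apply: (separable_restrict_blocks vs _ has2 has1 vC) => //; last by rewrite orbC.
by move=> x /cov; rewrite orbC.
Qed.

End Pair.
End Votes.

Lemma group_separable_pair_of n m (P : election n m) i j :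
  group_separable P -> group_separable_pair (P i) (P j).
Proof.
move=> /forallP gs C' C'2.
have /existsP[C1 /and4P[sub ne1 ne2 /forallP sepC]] := implyP (gs C') C'2.
by exists C1; split; rewrite ?sepC.
Qed.

Lemma card_separable_votes m (v : vote m) :
  #|[set w : vote m | separableb (ranking v) (ranking w)]| <= schroeder m.
Proof.
have := size_separables_le (ranking_uniq v); rewrite size_ranking; apply: leq_trans.
rewrite cardE -(size_map (@ranking m)).
apply: uniq_leq_size; first by rewrite map_inj_uniq ?enum_uniq //; exact: ranking_inj.
by move=> r /mapP[w]; rewrite mem_enum inE => vw ->; rewrite mem_separables.
Qed.

Lemma card_ffun_fixed_head (T : finType) n (v : T) (W : {set T}) :
  #|[set P : {ffun 'I_n.+1 -> T} | (P ord0 == v) && [forall i, (i != ord0) ==> (P i \in W)]]| =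
  #|W| ^ n.
Proof.
have := card_family (fun i : 'I_n.+1 => if i == ord0 then pred1 v else mem W).
rewrite foldrE big_map big_enum /= big_ord_recl /= card1 mul1n prod_nat_const card_ord => <-.
apply: eq_card => P; rewrite inE; apply/andP/familyP => [[/eqP P0 /forall_inP PW] i | PF].
  by case: eqP => [-> | /eqP i0]; rewrite ?inE ?P0 // PW.
split; first by have := PF ord0; rewrite eqxx inE.
by apply/forall_inP => i i0; have := PF i; rewrite (negPf i0).
Qed.

Lemma num_gs_le n m : num_gs n.+1 m <= m`! * schroeder m ^ n.
Proof.
pose W (v : vote m) := [set w : vote m | separableb (ranking v) (ranking w)].
pose X (v : vote m) := [set P : election n.+1 m |
  (P ord0 == v) && [forall i, (i != ord0) ==> (P i \in W v)]].
have gsX : num_gs n.+1 m <= \sum_(v : vote m) #|X v|.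
  rewrite /num_gs -sum1_card (partition_big (fun P : election n.+1 m => P ord0) predT) //=.
  apply: leq_sum => v _; rewrite sum1_card; apply/subset_leq_card/subsetP => P.
  rewrite !inE => /andP[+ /eqP P0]; rewrite inE P0 eqxx => gs; apply/forall_inP => i _.
  by rewrite inE -P0; apply/separableP/separable_ranking_pair/group_separable_pair_of.
apply: (leq_trans gsX); rewrite -card_Sn -sum_nat_const; apply: leq_sum => v _.
rewrite card_ffun_fixed_head; have [-> // | n0] := posnP n.
by rewrite leq_exp2r ?card_separable_votes.
Qed.

Import Order.TTheory GRing.Theory Num.Theory.
Local Open Scope ring_scope.

Section SchroederSeries.
Variable R : rcfType.

Lemma sum_convolution (f : nat -> R) N :
  \sum_(2 <= m < N.+2) \sum_(1 <= k < m) f k * f (m - k)%N =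
  \sum_(1 <= k < N.+1) f k * \sum_(1 <= j < N.+2 - k) f j.
Proof.
elim: N => [|N IH]; first by rewrite !big_geq.
rewrite big_nat_recr //= IH.
transitivity (\sum_(1 <= k < N.+2) (f k * \sum_(1 <= j < N.+2 - k) f j + f k * f (N.+2 - k)%N)).
  rewrite big_split /= [X in _ = X + _]big_nat_recr //=.
  by rewrite (subSnn N.+1) (big_geq (leqnn 1)) mulr0 addr0.
apply: eq_big_nat => k /andP[k1 kN].
by rewrite (@subSn k N.+2) 1?big_nat_recr /= ?mulrDr //; lia.
Qed.

Definition schroeder_term (x : R) m := (schroeder m)%:R * x ^+ m.

Lemma schroeder_termE x m : (1 < m)%N ->
  schroeder_term x m = \sum_(1 <= k < m) schroeder_term x k * schroeder_term x (m - k)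
                       + x * schroeder_term x m.-1.
Proof.
case: m => // m m2; rewrite /schroeder_term schroederE // natr_sum mulr_suml.
under eq_bigr => k _ do rewrite natrM natrD.
rewrite !(big_ltn m2) schroeder_small // subSS subn0 -addrA [X in _ = _ + X]addrC addrA.
congr (_ + _); first by rewrite eqxx /= exprS; ring.
apply: eq_big_nat => k /andP[k2 km].
rewrite (_ : (k == 1)%N = false); last by apply/eqP; lia.
have -> : x ^+ m.+1 = x ^+ k * x ^+ (m.+1 - k)%N by rewrite -exprD subnKC // ltnW.
by rewrite addr0; ring.
Qed.

Lemma schroeder_partial_sum_le x s : 0 <= x -> x <= s -> x + s * s + x * s <= s ->
  forall N, \sum_(1 <= m < N.+1) schroeder_term x m <= s.
Proof.
move=> x0 xs xss; have s0 : 0 <= s by apply: le_trans xs.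
have t0 m : 0 <= schroeder_term x m by rewrite mulr_ge0 ?exprn_ge0.
elim=> [|N IH]; first by rewrite big_geq.
set T := \sum_(1 <= m < N.+1) schroeder_term x m in IH.
have T0 : 0 <= T by apply: sumr_ge0.
rewrite big_ltn // {1}/schroeder_term schroeder_small // mul1r expr1.
rewrite (@eq_big_nat _ _ _ 2 N.+2 _ (fun m => \sum_(1 <= k < m) schroeder_term x k *
    schroeder_term x (m - k) + x * schroeder_term x m.-1)); last first.
  by move=> m /andP[m2 _]; exact: schroeder_termE.
rewrite big_split /= sum_convolution -mulr_sumr.
have -> : \sum_(2 <= m < N.+2) schroeder_term x m.-1 = T by rewrite big_add1.
have conv : \sum_(1 <= k < N.+1) schroeder_term x k * \sum_(1 <= j < N.+2 - k) schroeder_term x j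
    <= T * T.
  rewrite /T mulr_suml; apply: ler_sum_nat => k /andP[k1 kN].
  apply: ler_wpM2l => //.
  rewrite (@big_nat_widen _ _ _ 1 (N.+2 - k) N.+1) 1?big_mkcond /=; last by lia.
  by apply: ler_sum_nat => j _; case: ifP.
have TT : T * T <= s * s by apply: ler_pM.
have xT : x * T <= x * s by apply: ler_wpM2l.
lra.
Qed.

Lemma sqrt2_between : 4 / 3 <= Num.sqrt (2 : R) <= 3 / 2.
Proof.
have sqrt_sqr (a : R) : 0 <= a -> Num.sqrt (a ^+ 2) = a by move=> a0; rewrite sqrtr_sqr ger0_norm.
apply/andP; split; first by rewrite -[leLHS]sqrt_sqr ?ler_sqrt ?expr2; lra.
by rewrite -[leRHS]sqrt_sqr ?ler_sqrt ?expr2; lra.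
Qed.

Lemma schroeder_le_pow m : (schroeder m)%:R <= (3 + 2 * Num.sqrt (2 : R)) ^+ m.
Proof.
have /andP[t_ge t_le] := sqrt2_between; set t := Num.sqrt (2 : R) in t_ge t_le *.
have tt : t * t = 2 by rewrite -expr2 sqr_sqrtr // ler0n.
pose x := 3 - 2 * t; pose s := t - 1.
have x0 : 0 <= x by rewrite /x; lra.
have cx : (3 + 2 * t) * x = 1.
  have -> : (3 + 2 * t) * x = 1 + 4 * (2 - t * t) by rewrite /x; ring.
  by rewrite tt subrr mulr0 addr0.
have partial_le N : \sum_(1 <= k < N.+1) schroeder_term x k <= s.
  apply: schroeder_partial_sum_le => //; first by rewrite /x /s; lra.
  have -> : x + s * s + x * s = s + (2 - t * t) by rewrite /x /s; ring.
  by rewrite tt subrr addr0.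
have [-> | m0] := posnP m; first by rewrite schroeder_small // expr0.
have term_le : schroeder_term x m <= 1.
  apply: (le_trans _ (_ : s <= 1)); last by rewrite /s; lra.
  apply: le_trans (partial_le m); rewrite big_nat_recr //= lerDr.
  by apply: sumr_ge0 => k _; rewrite mulr_ge0 ?exprn_ge0.
have -> : (schroeder m)%:R = schroeder_term x m * (3 + 2 * t) ^+ m.
  by rewrite /schroeder_term -mulrA -exprMn [x * _]mulrC cx expr1n mulr1.
by rewrite -[leRHS]mul1r ler_wpM2r // exprn_ge0 //; lra.
Qed.

End SchroederSeries.

Theorem mainTheorem6 (R : rcfType) (n m : nat) (hn : (2 <= n)%N) (hm : (2 <= m)%N) :
  (num_gs n m)%:R <= (m`!)%:R * (3 + 2 * Num.sqrt (2 : R)) ^+ (m * (n - 1)) :> R.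
Proof.
have := num_gs_le n.-1 m; rewrite prednK ?(leq_trans _ hn) // -subn1 -(ler_nat R) => count_le.
apply: le_trans count_le _; rewrite natrM natrX exprM ler_wpM2l //.
by rewrite lerXn2r ?nnegrE ?schroeder_le_pow // (le_trans _ (schroeder_le_pow _ m)).
Qed.
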